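(* Let $(\mathbf{L},\mathbf{R})\in\mathcal{P}_{\mathsf N}$ be centered and suppose $\mathbf{L}\preceq^{\mathrm{BC}}\mathbf{R}$, i.e. $v\mathbf{L}\preceq v\mathbf{R}$ for every $v\in\{0,1\}^{\mathsf N+1}$. Then $(\mathbf{L},\mathbf{R})$ obeys region dominance: for every nonempty $X\subseteq[\mathsf N+1]$, $\big|\bigwedge_{i\in X}\mathbf{L}_{(i)}\big|\le\big|\bigwedge_{i\in X}\mathbf{R}_{(i)}\big|$ (and the pair is balanced).
   Context: $\mathcal{P}_{\mathsf N}$ denotes the set of pairs $(\mathbf{L},\mathbf{R})$ of $(0,1)$-matrices, $\mathbf{L}$ of size $(\mathsf N+1)\times m_L$ and $\mathbf{R}$ of size $(\mathsf N+1)\times m_R$, such that some index $p\in[\mathsf N+1]$ has row $p$ of $\mathbf{L}$ and row $p$ of $\mathbf{R}$ both zero. $\mathbf{A}_{(i)}$ is the $i$-th row; $e$ the all-ones row vector; $|v|=\sum_k|v_k|$; $\wedge$ is the bitwise AND of bit strings. The pair is centered if it is balanced ($|\mathbf{L}_{(i)}|=|\mathbf{R}_{(i)}|$ for all $i$) and some row satisfies $\mathbf{L}_{(i)}=e=\mathbf{R}_{(i)}$ (so both matrices have the same number of columns). For $x,y\in\mathbb{R}^d$, $x\preceq y$ means $\sum_{n=1}^k x^\downarrow_n\le\sum_{n=1}^k y^\downarrow_n$ for $k=1,\dots,d-1$ and $\sum_{n=1}^d x_n=\sum_{n=1}^d y_n$, with $x^\downarrow_n$ the $n$-th largest component. Thus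 $\big|\bigwedge_{i\in X}\mathbf{L}_{(i)}\big|$ is the number of columns of $\mathbf{L}$ having a $1$ in every row indexed by $X$. *)

From mathcomp Require Import all_boot all_order all_algebra.
Set Implicit Arguments. Unset Strict Implicit. Unset Printing Implicit Defensive.

Definition rownorm (n m : nat) (A : 'M[bool]_(n, m)) (i : 'I_n) : nat :=
  \sum_(j < m) (A i j : nat).

Definition vecmul (n m : nat) (v : 'I_n -> bool) (A : 'M[bool]_(n, m)) (j : 'I_m) : nat :=
  \sum_(i < n) ((v i && A i j) : nat).

Definition sorted_desc (d : nat) (x : 'I_d -> nat) : seq nat :=
  sort geq [seq x i | i <- enum 'I_d].

Definition topsum (d : nat) (x : 'I_d -> nat) (k : nat) : nat :=
  \sum_(n < k) nth 0 (sorted_desc x) n.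

Definition majorized (d : nat) (x y : 'I_d -> nat) : Prop :=
  (forall k, 1 <= k <= d.-1 -> topsum x k <= topsum y k) /\
  \sum_(n < d) x n = \sum_(n < d) y n.

Definition in_P (N mL mR : nat) (L : 'M[bool]_(N.+1, mL)) (R : 'M[bool]_(N.+1, mR)) : Prop :=
  exists p : 'I_N.+1, (forall j, L p j = false) /\ (forall j, R p j = false).

Definition balanced (N m : nat) (L R : 'M[bool]_(N.+1, m)) : Prop :=
  forall i, rownorm L i = rownorm R i.

Definition centered (N m : nat) (L R : 'M[bool]_(N.+1, m)) : Prop :=
  balanced L R /\ exists i : 'I_N.+1, (forall j, L i j = true) /\ (forall j, R i j = true).

Definition BC_dom (N m : nat) (L R : 'M[bool]_(N.+1, m)) : Prop :=
  forall v : 'I_N.+1 -> bool, majorized (vecmul v L) (vecmul v R).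

Definition wedge_card (n m : nat) (A : 'M[bool]_(n, m)) (X : {set 'I_n}) : nat :=
  #|[set j : 'I_m | [forall i in X, A i j]]|.

Definition region_dominance (N m : nat) (L R : 'M[bool]_(N.+1, m)) : Prop :=
  forall X : {set 'I_N.+1}, X != set0 -> wedge_card L X <= wedge_card R X.

From mathcomp Require Import all_boot all_order all_algebra.
From mathcomp Require Import zify.

Set Implicit Arguments.
Unset Strict Implicit.
Unset Printing Implicit Defensive.

(* Take v to be the indicator of X.  Every entry of v L and v R is at most
   #|X|, and the columns where the entry equals #|X| are exactly those counted
   by the wedge of the rows in X.  Majorization controls the number of maximal
   entries: if x has a entries equal to the common upper bound M, the a largest
   entries of x sum to a * M, while a entries of y of which at most b equal M
   sum to at most a * M - (a - b); so v L ⪯ v R forces a <= b. *)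

Lemma sumn_count_predC1_le (M : nat) (s : seq nat) :
  all (leq^~ M) s -> sumn s + count (predC1 M) s <= size s * M.
Proof.
elim: s => [|h t IH] //= /andP [hM /IH]; rewrite mulSn.
by case: eqVneq => [->|/eqP nhM] /=; lia.
Qed.

Lemma take_count_mem_sorted_geq (M : nat) (s : seq nat) :
  sorted geq s -> all (leq^~ M) s ->
  take (count_mem M s) s = nseq (count_mem M s) M.
Proof.
elim: s => [|h t IH] //= s_sorted /andP [hM tM].
have [->|nhM] := eqVneq h M.
  by rewrite -[true + _]/(count_mem M t).+1 /= IH // (path_sorted s_sorted).
have t_le_h : all (geq h) t.
  by apply: order_path_min s_sorted => a b c /= ba cb; apply: leq_trans cb ba.
have -> : count_mem M t = 0.
  apply/eqP; rewrite -leqn0 leqNgt -has_count; apply/hasP => -[e /(allP t_le_h)].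
  by move=> /= eh /eqP eM; move: nhM; lia.
by rewrite take0.
Qed.

Lemma size_sorted_desc (d : nat) (x : 'I_d -> nat) : size (sorted_desc x) = d.
Proof. by rewrite size_sort size_map size_enum_ord. Qed.

Lemma perm_sorted_desc (d : nat) (x : 'I_d -> nat) :
  perm_eq (sorted_desc x) [seq x i | i <- enum 'I_d].
Proof. exact: permEl (perm_sort _ _). Qed.

Lemma topsum_sumn_take (d : nat) (x : 'I_d -> nat) (k : nat) :
  topsum x k = sumn (take k (sorted_desc x)).
Proof.
rewrite /topsum; elim: (sorted_desc x) k => [|h t IH] [|k] //=.
- by rewrite big_ord0.
- by rewrite big1 // => i _; rewrite nth_nil.
- by rewrite big_ord0.
- by rewrite big_ord_recl /= IH.
Qed.

Lemma topsum_full (d : nat) (x : 'I_d -> nat) : topsum x d = \sum_(n < d) x n.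
Proof.
rewrite topsum_sumn_take take_oversize ?size_sorted_desc //.
by rewrite (perm_sumn (perm_sorted_desc x)) sumnE big_map big_enum.
Qed.

Lemma majorized_topsum (d : nat) (x y : 'I_d -> nat) (k : nat) :
  majorized x y -> k <= d -> topsum x k <= topsum y k.
Proof.
move=> [top_le sum_eq] kd; case: k kd => [|k] kd.
  by rewrite /topsum !big_ord0.
have [ltkd | lekd] := ltnP k.+1 d; first by apply: top_le; lia.
have -> : k.+1 = d by apply/eqP; rewrite eqn_leq kd lekd.
by rewrite !topsum_full sum_eq.
Qed.

Lemma count_mem_sorted_desc (d : nat) (x : 'I_d -> nat) (M : nat) :
  count_mem M (sorted_desc x) = #|[pred j | x j == M]|.
Proof.
rewrite (permP (perm_sorted_desc x)) count_map cardE size_filter.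
by rewrite enumT; apply: eq_count => j; rewrite /= eq_sym.
Qed.

Lemma majorized_card_eq_max (d M : nat) (x y : 'I_d -> nat) :
  (forall j, x j <= M) -> (forall j, y j <= M) -> majorized x y ->
  #|[pred j | x j == M]| <= #|[pred j | y j == M]|.
Proof.
move=> xM yM xy; set a := #|[pred j | x j == M]|.
have ad : a <= d by rewrite -[d]card_ord max_card.
have bounded (z : 'I_d -> nat) : (forall j, z j <= M) -> all (leq^~ M) (sorted_desc z).
  by move=> zM; rewrite all_sort all_map; apply/allP => j _ /=.
have topsum_x : topsum x a = a * M.
  rewrite topsum_sumn_take /a -count_mem_sorted_desc take_count_mem_sorted_geq.
  - by rewrite sumn_nseq mulnC.
  - by apply: sort_sorted => p q; apply: leq_total.
  - exact: bounded.
set ty := take a (sorted_desc y).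
have ty_size : size ty = a by rewrite size_take size_sorted_desc; case: ltngtP ad.
have ty_le : sumn ty + count (predC1 M) ty <= a * M.
  rewrite -ty_size sumn_count_predC1_le //.
  by move: (bounded y yM); rewrite -(cat_take_drop a (sorted_desc y)) all_cat => /andP [].
have ty_count_le : count_mem M ty <= count_mem M (sorted_desc y).
  by rewrite -[X in _ <= count_mem M X](cat_take_drop a) count_cat leq_addr.
have ty_split : count_mem M ty + count (predC1 M) ty = a.
  by rewrite -ty_size -(count_predC (pred1 M)); congr (_ + _); apply: eq_count.
have := majorized_topsum xy ad; rewrite topsum_x topsum_sumn_take -/ty.
rewrite -count_mem_sorted_desc; lia.
Qed.

Section IndicatorRow.

Variables (n m : nat) (A : 'M[bool]_(n, m)) (X : {set 'I_n}).

Lemma vecmul_indicator (j : 'I_m) :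
  vecmul (fun i => i \in X) A j = #|[pred i in X | A i j]|.
Proof.
rewrite /vecmul -sum1_card [RHS]big_mkcond; apply: eq_bigr => i _.
by rewrite !inE; case: (_ && _).
Qed.

Lemma vecmul_indicator_sub (j : 'I_m) : [pred i in X | A i j] \subset X.
Proof. by apply/subsetP => i /andP []. Qed.

Lemma vecmul_indicator_le (j : 'I_m) : vecmul (fun i => i \in X) A j <= #|X|.
Proof. by rewrite vecmul_indicator subset_leq_card ?vecmul_indicator_sub. Qed.

Lemma vecmul_indicator_eq (j : 'I_m) :
  (vecmul (fun i => i \in X) A j == #|X|) = [forall i in X, A i j].
Proof.
rewrite vecmul_indicator (subset_leqif_card (vecmul_indicator_sub j)).2.
apply/subsetP/forall_inP => [sub i iX | allX i iX].
  by have /andP [] := sub i iX.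
by rewrite inE iX allX.
Qed.

Lemma wedge_card_vecmul :
  wedge_card A X = #|[pred j | vecmul (fun i => i \in X) A j == #|X|]|.
Proof. by apply: eq_card => j; rewrite !inE vecmul_indicator_eq. Qed.

End IndicatorRow.

Theorem theorem4 (N m : nat) (L R : 'M[bool]_(N.+1, m)) :
  in_P L R -> centered L R -> BC_dom L R ->
  region_dominance L R /\ balanced L R.
Proof.
move=> _ [LR_balanced _] LR_BC; split => // X _.
rewrite !wedge_card_vecmul; apply: majorized_card_eq_max.
- exact: vecmul_indicator_le.
- exact: vecmul_indicator_le.
- exact: LR_BC.
Qed.
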